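(* Let $K$ be the set of double cones of Minkowski spacetime $\mathbb M^4$ with symmetry group the Poincaré group $\mathscr P^\uparrow_+$. There exists $f\in\mathrm C^0(K,\mathcal D)^{\mathscr P^\uparrow_+}$ such that $f_a$ is nonzero and non-negative for every $a\in K$. Furthermore, the 1-cochain $\delta f$ belongs to $\mathrm C^1(K,\mathcal D)^{\mathscr P^\uparrow_+}$ and satisfies: (i) $(\delta f)^{ev}_b=f_{|b|}$ is nonzero and non-negative for every 1-simplex $b$; (ii) $(\delta f)^{odd}_b=f_{\partial_0b}-f_{\partial_1b}\neq0$ for every 1-simplex $b$ with $\partial_0b\ne\partial_1b$.
   Context: Double cones: sets $s(o_R)$ with $R>0$, $o_R=\{(t,\mathbf x)\in\mathbb R^4:|t|+|\mathbf x|<R\}$, and $s\in\mathscr P^\uparrow_+$ (proper orthochronous Poincaré group); $K$ is ordered by inclusion and $\mathscr P^\uparrow_+$ acts by $o\mapsto s(o)$. A 1-simplex is $b=(|b|;\partial_0b,\partial_1b)$ with $|b|,\partial_0b,\partial_1b\in K$, $\partial_0b,\partial_1b\subseteq|b|$; opposite $\overline b=(|b|;\partial_1b,\partial_0b)$; $s(b)=(s(|b|);s(\partial_0b),s(\partial_1b))$. $\mathcal D_a$: real smooth compactly supported functions on $\mathbb R^4$ vanishing outside the closure of $a$. $\mathrm C^0(K,\mathcal D)$: maps $a\mapsto f_a\in\mathcal D_a$; $\mathrm C^1(K,\mathcal D)$: maps $b\mapsto f_b\in\mathcal D_{|b|}$ on 1-simplices. $S$-action: $(sf)_x=f_{s(x)}\circ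 s$; $\mathrm C^n(K,\mathcal D)^{\mathscr P^\uparrow_+}$ denotes the fixed points. $(\delta f)_b:=f_{\partial_0b}-f_{\partial_1b}+f_{|b|}$ for $f\in\mathrm C^0(K,\mathcal D)$. For $g\in\mathrm C^1(K,\mathcal D)$: $g^{ev}_b=\tfrac12(g_b+g_{\overline b})$, $g^{odd}_b=\tfrac12(g_b-g_{\overline b})$. *)

From HB Require Import structures.
From mathcomp Require Import all_boot all_order all_algebra.
From mathcomp Require Import all_classical all_reals all_analysis.
Set Implicit Arguments. Unset Strict Implicit. Unset Printing Implicit Defensive.
Import Order.TTheory GRing.Theory Num.Theory.
Import numFieldNormedType.Exports.
Local Open Scope classical_set_scope.
Local Open Scope ring_scope.

Section Minkowski.
Variable R : realType.

(* Minkowski spacetime M^4 : row vectors (t, x1, x2, x3), index 0 = time. *)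
Definition pt := 'rV[R]_4.

Definition eta : 'M[R]_4 := diag_mx (\row_(i < 4) (if i == 0 then 1 else -1)).

Definition poincare (L : 'M[R]_4) (a : pt) : Prop :=
  L *m eta *m L^T = eta /\ \det L = 1 /\ 0 < L 0 0.

Definition pact (L : 'M[R]_4) (a : pt) (x : pt) : pt := x *m L + a.

Definition spatial_norm (x : pt) : R :=
  Num.sqrt (\sum_(i < 4 | i != 0) x 0 i ^+ 2).

Definition double_cone0 (r : R) : set pt :=
  [set x : pt | `|x 0 0| + spatial_norm x < r].

Definition isK (a : set pt) : Prop :=
  exists r : R, 0 < r /\
    exists L b, poincare L b /\ a = pact L b @` double_cone0 r.

Fixpoint smooth_n (n : nat) (f : pt -> R) : Prop :=
  match n with
  | 0 => continuous f
  | n'.+1 => (forall x, differentiable f x) /\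
             (forall v : pt, smooth_n n' ('D_v f))
  end.
Definition smooth (f : pt -> R) : Prop := forall n, smooth_n n f.

Definition testfun (a : set pt) (f : pt -> R) : Prop :=
  smooth f /\ compact (closure [set x : pt | f x != 0]) /\
  (forall x, ~ closure a x -> f x = 0).

Definition C0 (f : set pt -> pt -> R) : Prop :=
  forall a, isK a -> testfun a (f a).

Definition C0_inv (f : set pt -> pt -> R) : Prop :=
  forall L b, poincare L b -> forall a, isK a ->
    f (pact L b @` a) \o pact L b = f a.

(* 1-simplex b = (|b| ; d0 b, d1 b) given as (c ; d0, d1). *)
Definition simplex1 (c d0 d1 : set pt) : Prop :=
  [/\ isK c, isK d0, isK d1, d0 `<=` c & d1 `<=` c].

Definition C1 (g : set pt -> set pt -> set pt -> pt -> R) : Prop :=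
  forall c d0 d1, simplex1 c d0 d1 -> testfun c (g c d0 d1).

Definition C1_inv (g : set pt -> set pt -> set pt -> pt -> R) : Prop :=
  forall L b, poincare L b -> forall c d0 d1, simplex1 c d0 d1 ->
    g (pact L b @` c) (pact L b @` d0) (pact L b @` d1) \o pact L b
    = g c d0 d1.

Definition delta (f : set pt -> pt -> R) : set pt -> set pt -> set pt -> pt -> R :=
  fun c d0 d1 x => f d0 x - f d1 x + f c x.

Definition cev (g : set pt -> set pt -> set pt -> pt -> R) c d0 d1 : pt -> R :=
  fun x => (g c d0 d1 x + g c d1 d0 x) / 2.
Definition codd (g : set pt -> set pt -> set pt -> pt -> R) c d0 d1 : pt -> R :=
  fun x => (g c d0 d1 x - g c d1 d0 x) / 2.

End Minkowski.

From Pilot Require Import Defs.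
From HB Require Import structures.
From mathcomp Require Import all_boot all_order all_algebra.
From mathcomp Require Import all_classical all_reals all_analysis.
From mathcomp Require Import ring lra.
Import Order.TTheory GRing.Theory Num.Theory.
Import numFieldNormedType.Exports.
Set Implicit Arguments. Unset Strict Implicit. Unset Printing Implicit Defensive.
Local Open Scope classical_set_scope.
Local Open Scope ring_scope.

(* Every double cone is an open diamond {x | x - p and q - x future timelike} whose
   tips p, q are recovered from its closure, so a 0-cochain can be defined through the
   tips.  The function exp_inv 1 s = exp (-1/s) (s > 0, and 0 otherwise) is smooth, all
   its derivatives being of the form P(1/s) exp (-1/s).  Its product over the three
   Minkowski products (x-p)^2, (q-x)^2 and (x-p).(q-x) is smooth, non-negative, has the
   diamond as its exact support, and is Poincare covariant because the Minkowski form is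
   Lorentz invariant.  As the support recovers the cone, d0 <> d1 forces f_d0 <> f_d1;
   the remaining statements about delta f are formal. *)

Section ExpInv.
Variable R : realType.
Implicit Types (P Q : {poly R}) (s x y : R).

Definition exp_inv P s : R := if 0 < s then P.[s^-1] * expR (- s^-1) else 0.

Definition exp_inv_deriv P : {poly R} := (P - P^`()) * 'X^2.

Lemma exp_inv_le0 P s : s <= 0 -> exp_inv P s = 0.
Proof. by move=> s0; rewrite /exp_inv ltNge s0. Qed.

Lemma normr_horner_le Q y : 1 <= y ->
  `|Q.[y]| <= (\sum_(i < size Q) `|Q`_i|) * y ^+ size Q.
Proof.
move=> y1; rewrite horner_coef mulr_suml.
apply: (le_trans (ler_norm_sum _ _ _)); apply: ler_sum => i _.
rewrite normrM normrX (ger0_norm (le_trans ler01 y1)).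
by apply: ler_wpM2l => //; exact: (ler_weXn2l y1 (ltnW (ltn_ord i))).
Qed.

(* [expR (x^-1) >= x^-(n+1) / (n+1)!] beats the growth of [Q.[x^-1]], n = size Q. *)
Lemma exp_inv_linear_bound Q :
  exists2 C, 0 <= C & forall x, 0 < x <= 1 -> `|exp_inv Q x| <= C * x.
Proof.
set M := \sum_(i < size Q) `|Q`_i|; set k : R := (size Q).+1`!%:R.
have M0 : 0 <= M by apply: sumr_ge0.
have k0 : 0 < k by rewrite ltr0n fact_gt0.
exists (M * k); first by rewrite mulr_ge0 // ltW.
move=> x /andP[x0 x1]; rewrite /exp_inv x0.
have y1 : 1 <= x^-1 by rewrite invf_ge1.
have y0 : 0 < x^-1 by rewrite invr_gt0.
rewrite normrM (ger0_norm (expR_ge0 _)) expRN.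
apply: (le_trans (ler_wpM2r _ (normr_horner_le Q y1))); first by rewrite invr_ge0 expR_ge0.
rewrite ler_pdivrMr ?expR_gt0 //.
have hexp : x^-1 ^+ (size Q).+1 / k <= expR x^-1.
  by apply: le_trans (expR_ge1Dxn (size Q) (ltW y0)); rewrite lerDr.
have Cx0 : 0 <= M * k * x by rewrite !mulr_ge0 // ltW.
apply: le_trans (ler_wpM2l Cx0 hexp).
rewrite exprS.
suff -> : M * k * x * (x^-1 * x^-1 ^+ size Q / k) = M * x^-1 ^+ size Q by [].
by field; rewrite !lt0r_neq0.
Qed.

Lemma exp_inv_cvg0 Q : exp_inv Q x @[x --> (0:R)] --> 0.
Proof.
have [C C0 hC] := exp_inv_linear_bound Q.
apply/cvgr0Pnorm_lt => e e0.
have d0 : 0 < Num.min 1 (e / (C + 1)) by rewrite lt_min ltr01 /= divr_gt0 // ltr_wpDl.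
near=> x.
have hx : `|x| < Num.min 1 (e / (C + 1)).
  by near: x; exists (Num.min 1 (e / (C + 1))) => //= y; rewrite /ball_ /= sub0r normrN.
have [xle|xgt] := leP x 0; first by rewrite exp_inv_le0 // normr0.
move: hx; rewrite lt_min (gtr0_norm xgt) => /andP[x1 xe].
apply: (le_lt_trans (hC x _)); first by rewrite xgt ltW.
have : (C + 1) * x < e by rewrite mulrC -ltr_pdivlMr // ltr_wpDl.
by apply: le_lt_trans; rewrite ler_wpM2r ?ltW // ltrDl.
Unshelve. all: by end_near. Qed.

Lemma is_derive_exp_inv Q x : is_derive x 1 (exp_inv Q) (exp_inv (exp_inv_deriv Q) x).
Proof.
have [x0|x0|->] := ltgtP x 0.
- apply: (near_eq_is_derive (f := cst 0)); last first.
    by rewrite exp_inv_le0 ?ltW //; exact: is_derive_cst.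
  by near=> y; rewrite exp_inv_le0 // ltW //; near: y; exact: lt_nbhsl.
- pose g y := Q.[y^-1] * expR (- y^-1).
  apply: (near_eq_is_derive (f := g)).
    by near=> y; rewrite /exp_inv /g ifT //; near: y; exact: lt_nbhsr.
  have xn : x != 0 by rewrite gt_eqF.
  have Hi : is_derive x 1 (fun y : R => y^-1) (- x ^- 2 *: 1).
    exact: (@is_deriveV R id x 1 1 xn).
  have HQ : is_derive x 1 (horner Q \o (fun y : R => y^-1))
      (Q^`().[x^-1] * (- x ^- 2 *: 1)) by exact: is_derive1_comp _ Hi.
  have Hexp : is_derive x 1 (expR \o (fun y : R => - y^-1))
      (expR (- x^-1) * (- (- x ^- 2 *: 1))) by exact: is_derive1_comp _ (is_deriveN Hi).
  apply: (is_derive_eq (is_deriveM HQ Hexp)).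
  by rewrite /exp_inv x0 /exp_inv_deriv /= !hornerE /GRing.scale /=; field.
- (* the difference quotient at 0 is [exp_inv (Q * 'X)], which tends to 0 *)
  have Hq : (fun h : R => h^-1 *: ((exp_inv Q \o shift 0) (h *: 1) - exp_inv Q 0))
            = exp_inv (Q * 'X).
    apply/funext => h /=.
    rewrite (exp_inv_le0 _ (lexx 0)) subr0 addr0 /GRing.scale /= mulr1 /exp_inv.
    by case: ifP => h0; [rewrite hornerM hornerX; ring | rewrite mulr0].
  have Hc : (fun h : R => h^-1 *: ((exp_inv Q \o shift 0) (h *: 1) - exp_inv Q 0))
            @ 0^' --> 0.
    by rewrite Hq; apply: cvg_within_filter; exact: exp_inv_cvg0.
  rewrite (exp_inv_le0 _ (lexx 0)); apply: DeriveDef; first exact: cvgP Hc.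
  by rewrite /derive; apply: cvg_lim.
Unshelve. all: by end_near.
Qed.

Lemma exp_inv1_ge0 s : 0 <= exp_inv 1 s.
Proof. by rewrite /exp_inv; case: ifP => // _; rewrite hornerC mul1r expR_ge0. Qed.

Lemma exp_inv1_neq0 s : exp_inv 1 s != 0 <-> 0 < s.
Proof.
rewrite /exp_inv; case: ifP => h; last by rewrite eqxx.
by rewrite hornerC mul1r expR_eq0.
Qed.

End ExpInv.

Section Smooth.
Variable R : realType.
Local Notation pt := (pt R).
Implicit Types f g : pt -> R.

Lemma smooth_nS n f : smooth_n n.+1 f -> smooth_n n f.
Proof.
elim: n f => [|n IH] f /= [df Df]; first by move=> x; apply: differentiable_continuous.
by split=> // v; apply: IH; exact: Df.
Qed.

Lemma smooth_nD n f g : smooth_n n f -> smooth_n n g -> smooth_n n (fun x => f x + g x).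
Proof.
elim: n f g => [|n IH] f g /=.
  by move=> cf cg x; exact: (@continuousD _ _ _ f g x (cf x) (cg x)).
move=> [df Df] [dg Dg]; split; first by move=> x; exact: differentiableD.
move=> v.
have -> : 'D_v (fun x => f x + g x) = (fun x => 'D_v f x + 'D_v g x).
  apply/funext => x.
  by rewrite (deriveD (diff_derivable (v:=v) (df x)) (diff_derivable (v:=v) (dg x))).
exact: IH.
Qed.

Lemma smooth_nM n f g : smooth_n n f -> smooth_n n g -> smooth_n n (fun x => f x * g x).
Proof.
elim: n f g => [|n IH] f g /=.
  by move=> cf cg x; exact: (@continuousM _ _ f g x (cf x) (cg x)).
move=> [df Df] [dg Dg]; split; first by move=> x; exact: differentiableM.
move=> v.
have -> : 'D_v (fun x => f x * g x) = (fun x => f x * 'D_v g x + g x * 'D_v f x).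
  apply/funext => x.
  by rewrite (deriveM (diff_derivable (v:=v) (df x)) (diff_derivable (v:=v) (dg x))).
by apply: smooth_nD; apply: IH => //; apply: smooth_nS; split.
Qed.

Lemma smooth_n_cst n (c : R) : smooth_n n (fun _ : pt => c).
Proof.
elim: n c => [|n IH] c /=; first by move=> x; exact: cst_continuous.
split; first by move=> x; exact: differentiable_cst.
move=> v; have -> : 'D_v (fun _ : pt => c) = (fun _ => 0).
  by apply/funext => x; exact: derive_cst.
exact: IH.
Qed.

Lemma smooth_nN n f : smooth_n n f -> smooth_n n (fun x => - f x).
Proof.
move=> hf; have -> : (fun x => - f x) = (fun x => -1 * f x).
  by apply/funext => x; rewrite mulN1r.
by apply: smooth_nM => //; exact: smooth_n_cst.
Qed.

Lemma smooth_nB n f g : smooth_n n f -> smooth_n n g -> smooth_n n (fun x => f x - g x).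
Proof. by move=> hf hg; apply: smooth_nD => //; exact: smooth_nN. Qed.

Lemma smooth_n_coord n (i : 'I_4) : smooth_n n (fun x : pt => x 0 i).
Proof.
case: n => [|n] /=; first exact: coord_continuous.
split; first by move=> x; exact: differentiable_coord.
move=> v.
have @l : {linear pt -> R}.
  by exists (fun N : pt => N 0 i); do 2![eexists]; do ?[constructor];
     rewrite ?mxE// => ? *; rewrite ?mxE//; move=> ?; rewrite !mxE.
have -> : 'D_v (fun x : pt => x 0 i) = (fun _ => v 0 i).
  apply/funext => x; rewrite deriveE; last exact: differentiable_coord.
  rewrite (_ : (fun x : pt => x 0 i) = l) // diff_lin //; exact: coord_continuous.
exact: smooth_n_cst.
Qed.

Lemma smooth_n_comp_derivatives n (F : pt -> R) (D : nat -> R -> R) :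
  smooth F -> (forall k (x : R), is_derive x 1 (D k) (D k.+1 x)) ->
  smooth_n n (fun x => D 0%N (F x)).
Proof.
move=> sF; elim: n D => [|n IH] D hD /=.
  move=> x; apply: continuous_comp; first exact: (sF 0%N).
  by apply: differentiable_continuous; apply/derivable1_diffP; case: (hD 0%N (F x)).
have dF x : differentiable F x by case: (sF 1%N).
have dD k y : differentiable (D k) y by apply/derivable1_diffP; case: (hD k y).
split; first by move=> x; exact: differentiable_comp.
move=> v.
have -> : 'D_v (fun x => D 0%N (F x)) = (fun x => D 1%N (F x) * 'D_v F x).
  apply/funext => x /=.
  rewrite (deriveE v (differentiable_comp (dF x) (dD 0%N (F x)))).
  rewrite (diff_comp (dF x) (dD 0%N (F x))) /=.
  rewrite (diff1E (dD 0%N (F x))) -(deriveE v (dF x)) derive1E.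
  by case: (hD 0%N (F x)) => _ ->; rewrite /GRing.scale /= mulrC.
apply: smooth_nM; first exact: (IH (fun k => D k.+1)).
by case: (sF n.+1) => _; apply.
Qed.

Lemma smooth_exp_inv_comp (P : {poly R}) (F : pt -> R) :
  smooth F -> smooth (fun x => exp_inv P (F x)).
Proof.
move=> sF n; apply: (smooth_n_comp_derivatives n sF
  (D := fun k => exp_inv (iter k (@exp_inv_deriv R) P))).
by move=> k x; exact: is_derive_exp_inv.
Qed.

End Smooth.

Section Minkowski.
Variable R : realType.
Local Notation pt := (pt R).
Implicit Types (p q u v w x : pt).

Definition o1 : 'I_4 := @Ordinal 4 1 isT.
Definition o2 : 'I_4 := @Ordinal 4 2 isT.
Definition o3 : 'I_4 := @Ordinal 4 3 isT.

Lemma ord4P (j : 'I_4) : [\/ j = 0, j = o1, j = o2 | j = o3].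
Proof.
case: j => [[|[|[|[|k]]]] Hk] //;
  [constructor 1|constructor 2|constructor 3|constructor 4]; exact: val_inj.
Qed.

Lemma lift_ord4 : [/\ lift ord0 ord0 = o1, lift ord0 (lift ord0 ord0) = o2
                    & lift ord0 (lift ord0 (lift ord0 ord0)) = o3 :> 'I_4].
Proof. by split; apply: val_inj. Qed.

Definition mink u v : R :=
  u 0 0 * v 0 0 - u 0 o1 * v 0 o1 - u 0 o2 * v 0 o2 - u 0 o3 * v 0 o3.

Lemma minkE u v : mink u v = (u *m @Defs.eta R *m v^T) 0 0.
Proof.
have [h1 h2 h3] := lift_ord4.
rewrite /mink /Defs.eta !mxE !big_ord_recl big_ord0 /= !mxE.
by rewrite !big_ord_recl !big_ord0 /= !mxE /= h1 h2 h3; ring.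
Qed.

Lemma mink_lorentz (L : 'M[R]_4) u v : L *m @Defs.eta R *m L^T = @Defs.eta R ->
  mink (u *m L) (v *m L) = mink u v.
Proof.
move=> HL; rewrite !minkE trmx_mul -!mulmxA; congr (_ 0 0); congr (u *m _).
by rewrite !mulmxA HL.
Qed.

Lemma minkC u v : mink u v = mink v u.
Proof. by rewrite /mink; ring. Qed.
Lemma minkNl u w : mink (- u) w = - mink u w.
Proof. by rewrite /mink !mxE; ring. Qed.
Lemma minkZl (c : R) u w : mink (c *: u) w = c * mink u w.
Proof. by rewrite /mink !mxE; ring. Qed.
Lemma minkNr u w : mink w (- u) = - mink w u.
Proof. by rewrite minkC minkNl minkC. Qed.
Lemma minkZr (c : R) u w : mink w (c *: u) = c * mink w u.
Proof. by rewrite minkC minkZl minkC. Qed.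
Lemma minkNN u v : mink (- u) (- v) = mink u v.
Proof. by rewrite minkNl minkNr opprK. Qed.

Lemma minkxx u : mink u u = u 0 0 ^+ 2 - (u 0 o1 ^+ 2 + u 0 o2 ^+ 2 + u 0 o3 ^+ 2).
Proof. by rewrite /mink; ring. Qed.

Definition future v := 0 < v 0 0 /\ 0 < mink v v.
Definition causal v := 0 <= v 0 0 /\ 0 <= mink v v.

Lemma cauchy_schwarz3 (a1 a2 a3 b1 b2 b3 : R) :
  (a1 * b1 + a2 * b2 + a3 * b3) ^+ 2 <=
  (a1 ^+ 2 + a2 ^+ 2 + a3 ^+ 2) * (b1 ^+ 2 + b2 ^+ 2 + b3 ^+ 2).
Proof.
rewrite -subr_ge0.
have -> : (a1^+2 + a2^+2 + a3^+2) * (b1^+2 + b2^+2 + b3^+2) - (a1*b1 + a2*b2 + a3*b3)^+2 =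
  (a1*b2 - a2*b1)^+2 + (a1*b3 - a3*b1)^+2 + (a2*b3 - a3*b2)^+2 by ring.
by rewrite !addr_ge0 ?sqr_ge0.
Qed.

Lemma reverse_cauchy_schwarz3 (a0 a1 a2 a3 b0 b1 b2 b3 : R) : 0 < a0 -> 0 < b0 ->
  a1 ^+ 2 + a2 ^+ 2 + a3 ^+ 2 < a0 ^+ 2 -> b1 ^+ 2 + b2 ^+ 2 + b3 ^+ 2 < b0 ^+ 2 ->
  a1 * b1 + a2 * b2 + a3 * b3 < a0 * b0.
Proof.
move=> a0p b0p ha hb; have := cauchy_schwarz3 a1 a2 a3 b1 b2 b3.
set sa := a1^+2 + a2^+2 + a3^+2; set sb := b1^+2 + b2^+2 + b3^+2.
set d := a1*b1 + a2*b2 + a3*b3 => hcs.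
have sa0 : 0 <= sa by rewrite /sa !addr_ge0 ?sqr_ge0.
have h1 : sa * sb < a0 ^+ 2 * b0 ^+ 2.
  apply: le_lt_trans (ler_wpM2l sa0 (ltW hb)) _.
  by rewrite ltr_pM2r ?exprn_gt0.
have h2 : d ^+ 2 < (a0 * b0) ^+ 2 by rewrite exprMn; exact: le_lt_trans hcs h1.
have ab0 : 0 < a0 * b0 by rewrite mulr_gt0.
have [dle|dgt] := leP d 0; first exact: le_lt_trans dle ab0.
by rewrite -(ltr_pXn2r (_ : (0 < 2)%N)) // ?nnegrE ?ltW.
Qed.

Lemma mink_future_gt0 u v : future u -> future v -> 0 < mink u v.
Proof.
move=> [u0 hu] [v0 hv]; move: hu hv; rewrite !minkxx !subr_gt0 => hu hv.
have := reverse_cauchy_schwarz3 u0 v0 hu hv.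
rewrite /mink -subr_gt0.
have -> : u 0 0 * v 0 0 - u 0 o1 * v 0 o1 - u 0 o2 * v 0 o2 - u 0 o3 * v 0 o3 =
  u 0 0 * v 0 0 - (u 0 o1 * v 0 o1 + u 0 o2 * v 0 o2 + u 0 o3 * v 0 o3) by ring.
by rewrite subr_gt0.
Qed.

Lemma timelike_time_neq0 u : 0 < mink u u -> u 0 0 != 0.
Proof.
rewrite minkxx; apply: contraTneq => ->.
by rewrite expr0n /= sub0r oppr_gt0 -leNgt !addr_ge0 ?sqr_ge0.
Qed.

Lemma futureZ (c : R) u : 0 < c -> future u -> future (c *: u).
Proof.
move=> c0 [u0 hu]; split; first by rewrite mxE mulr_gt0.
by rewrite minkZl minkZr !mulr_gt0.
Qed.

Lemma futureN u : u 0 0 < 0 -> 0 < mink u u -> future (- u).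
Proof. by move=> u0 hu; split; rewrite ?minkNN // mxE oppr_gt0. Qed.

Lemma causal_eq0 w : causal w -> causal (- w) -> w = 0.
Proof.
move=> [w0 hw] [wN _]; move: wN hw; rewrite mxE oppr_ge0 minkxx => wN.
have e0 : w 0 0 = 0 by apply/eqP; rewrite eq_le wN w0.
rewrite e0 expr0n /= sub0r oppr_ge0 => hw.
have s1 := sqr_ge0 (w 0 o1); have s2 := sqr_ge0 (w 0 o2); have s3 := sqr_ge0 (w 0 o3).
apply/matrixP => i j; rewrite [i]ord1 mxE.
by case: (ord4P j) => ->; rewrite ?e0 //; apply/eqP; rewrite -sqrf_eq0; apply/eqP; lra.
Qed.

Definition diamond p q : set pt :=
  [set x | 0 < mink (x - p) (x - p) /\ 0 < mink (q - x) (q - x) /\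
           0 < mink (x - p) (q - x)].

Lemma diamondC p q : diamond p q = diamond q p.
Proof.
suff E a b y : diamond a b y -> diamond b a y by apply/seteqP; split => y; apply: E.
move=> [h1 [h2 h3]]; split; last split.
- by rewrite -(opprB b y) minkNN.
- by rewrite -(opprB y a) minkNN.
- by rewrite -(opprB b y) -(opprB y a) minkNN minkC.
Qed.

Lemma diamondE p q x : future (q - p) -> diamond p q x <-> future (x - p) /\ future (q - x).
Proof.
move=> [t0 _]; split; last first.
  by move=> [ha hb]; split; [case: ha|split; [case: hb|exact: mink_future_gt0]].
move=> [ha [hb hab]].
have tq : (q - p) 0 0 = (x - p) 0 0 + (q - x) 0 0 by rewrite !mxE; ring.
have := timelike_time_neq0 ha; have := timelike_time_neq0 hb.
rewrite !neq_lt => /orP[b0|b0] /orP[a0|a0] //; exfalso.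
- by lra.
- have : 0 < mink (x - p) (- (q - x)) by apply: mink_future_gt0; [split|apply: futureN].
  by rewrite minkNr oppr_gt0 ltNge ltW.
- have : 0 < mink (- (x - p)) (q - x) by apply: mink_future_gt0; [apply: futureN|split].
  by rewrite minkNl oppr_gt0 ltNge ltW.
Qed.

Lemma diamond_segment p q (t : R) : future (q - p) -> 0 < t < 1 ->
  diamond p q (p + t *: (q - p)).
Proof.
move=> hf /andP[t0 t1]; apply/diamondE => //; split.
  by rewrite addrAC subrr add0r; apply: futureZ.
have -> : q - (p + t *: (q - p)) = (1 - t) *: (q - p).
  by apply/matrixP => i j; rewrite !mxE; ring.
by apply: futureZ => //; rewrite subr_gt0.
Qed.

End Minkowski.

Section DoubleCones.
Variable R : realType.
Local Notation pt := (pt R).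
Implicit Types (p q x : pt) (L : 'M[R]_4).

Lemma pactB L b x y : pact L b x - pact L b y = (x - y) *m L.
Proof. by rewrite /pact mulmxBl opprD addrACA subrr addr0. Qed.

Lemma pact_invmx L b x : L \in unitmx -> pact L b ((x - b) *m invmx L) = x.
Proof. by move=> hL; rewrite /pact mulmxKV // subrK. Qed.

Lemma pact_diamond L b p q : poincare L b ->
  pact L b @` diamond p q = diamond (pact L b p) (pact L b q).
Proof.
move=> [he [hdet _]]; have hL : L \in unitmx by rewrite unitmxE hdet unitr1.
have key z : diamond p q z <-> diamond (pact L b p) (pact L b q) (pact L b z).
  by rewrite /diamond /= !pactB !mink_lorentz.
apply/seteqP; split => x; first by move=> [z /key hz <-].
by move=> hx; exists ((x - b) *m invmx L); [apply/key; rewrite pact_invmx|exact: pact_invmx].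
Qed.

Lemma norm_add_lt_iff (t n r : R) : 0 < r -> 0 <= n ->
  `|t| + n < r <-> 0 < (t + r) ^+ 2 - n ^+ 2 /\ 0 < (r - t) ^+ 2 - n ^+ 2 /\
                     0 < (t + r) * (r - t) + n ^+ 2.
Proof.
move=> r0 n0.
have e1 : (t + r) ^+ 2 - n ^+ 2 = (t + r - n) * (t + r + n) by ring.
have e2 : (r - t) ^+ 2 - n ^+ 2 = (r - t - n) * (r - t + n) by ring.
rewrite e1 e2; split => [h|[h1 [h2 h3]]].
  have := ler_norm t; have := ler_norm (- t); rewrite normrN => ht1 ht2.
  have n2 := sqr_ge0 n.
  by split; [|split]; [apply: mulr_gt0; lra|apply: mulr_gt0; lra|nra].
(* adding the third expression to the first two gives [2 r (t + r)] and [2 r (r - t)] *)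
have p1 : 0 < r - t by nra.
have p2 : 0 < t + r by nra.
have q1 : 0 < t + r - n by move: h1; rewrite pmulr_lgt0 //; lra.
have q2 : 0 < r - t - n by move: h2; rewrite pmulr_lgt0 //; lra.
by have [t0|t0] := leP 0 t; [rewrite ger0_norm|rewrite ltr0_norm]; lra.
Qed.

Lemma spatial_normE x :
  spatial_norm x = Num.sqrt (x 0 o1 ^+ 2 + x 0 o2 ^+ 2 + x 0 o3 ^+ 2).
Proof.
rewrite /spatial_norm big_mkcond !big_ord_recl big_ord0 /=.
by have [-> -> ->] := lift_ord4; congr Num.sqrt; ring.
Qed.

Definition lower_tip (r : R) : pt := \row_j (if j == 0 then - r else 0).
Definition upper_tip (r : R) : pt := \row_j (if j == 0 then r else 0).

Lemma double_cone0E (r : R) : 0 < r ->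
  double_cone0 r = diamond (lower_tip r) (upper_tip r).
Proof.
move=> r0; apply/seteqP; split => x; rewrite /double_cone0 /= spatial_normE;
  set S := _ + _ + _.
all: have S0 : 0 <= S by rewrite /S !addr_ge0 ?sqr_ge0.
all: have n0 : 0 <= Num.sqrt S by rewrite sqrtr_ge0.
all: have hn := sqr_sqrtr S0.
all: have E1 : mink (x - lower_tip r) (x - lower_tip r) = (x 0 0 + r) ^+ 2 - Num.sqrt S ^+ 2
       by rewrite hn /mink /S !mxE /=; ring.
all: have E2 : mink (upper_tip r - x) (upper_tip r - x) = (r - x 0 0) ^+ 2 - Num.sqrt S ^+ 2
       by rewrite hn /mink /S !mxE /=; ring.
all: have E3 : mink (x - lower_tip r) (upper_tip r - x) =
       (x 0 0 + r) * (r - x 0 0) + Num.sqrt S ^+ 2 by rewrite hn /mink /S !mxE /=; ring.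
all: by rewrite /diamond /= E1 E2 E3; move/(norm_add_lt_iff _ r0 n0).
Qed.

Lemma isK_diamond (a : set pt) : isK a -> exists p q, future (q - p) /\ a = diamond p q.
Proof.
move=> [r [r0 [L [b [hP ->]]]]]; rewrite double_cone0E // pact_diamond //.
set P := pact L b (lower_tip r); set Q := pact L b (upper_tip r).
have hm : 0 < mink (Q - P) (Q - P).
  rewrite /P /Q pactB mink_lorentz; last by case: hP.
  by rewrite /mink !mxE /=; nra.
have := timelike_time_neq0 hm; rewrite neq_lt => /orP[t0|t0]; last by exists P, Q.
exists Q, P; split; last exact: diamondC.
by rewrite -opprB; apply: futureN.
Qed.

Lemma closure_open_segment (A : set pt) (z d : pt) :
  (forall t : R, 0 < t < 1 -> A (z + t *: d)) -> closure A z.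
Proof.
move=> hA B hB; pose g t := z + t *: d.
have gc : {for 0, continuous g}.
  by apply: continuousD; [exact: cst_continuous|exact: scalel_continuous].
have hB' : nbhs (0:R) (g @^-1` B) by apply: gc; rewrite /g scale0r addr0.
have H : \forall t \near (0:R)^'+, (0 < t /\ t < 1) /\ B (g t).
  near=> t; split; [split|].
  - by near: t; exact: nbhs_right_gt.
  - by near: t; apply: (cvg_within _); exact: (lt_nbhsl ltr01).
  - by near: t; exact: (cvg_within _ hB').
have [t [[t0 t1] Bt]] := filter_ex H.
by exists (g t); split => //; apply: hA; rewrite t0 t1.
Unshelve. all: by end_near.
Qed.

Lemma smooth_affine_coord (w : R) (e : pt) (i : 'I_4) :
  smooth (fun x : pt => (w *: x + e) 0 i).
Proof.
have -> : (fun x : pt => (w *: x + e) 0 i) = (fun x => w * x 0 i + e 0 i).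
  by apply/funext => x; rewrite !mxE.
move=> n; apply: smooth_nD; last exact: smooth_n_cst.
by apply: smooth_nM; [exact: smooth_n_cst|exact: smooth_n_coord].
Qed.

Lemma smooth_mink_affine (u v : R) (c d : pt) :
  smooth (fun x : pt => mink (u *: x + c) (v *: x + d)).
Proof.
by move=> n; rewrite /mink; repeat apply: smooth_nB; apply: smooth_nM;
  exact: smooth_affine_coord.
Qed.

Lemma closed_causal_affine (u : R) (c : pt) : closed [set x | causal (u *: x + c)].
Proof.
have -> : [set x | causal (u *: x + c)] =
    (fun x => (u *: x + c) 0 0) @^-1` [set y | 0 <= y] `&`
    (fun x => mink (u *: x + c) (u *: x + c)) @^-1` [set y | 0 <= y] by [].
apply: closedI; apply: preimage_closed; try exact: closed_ge.
  by move=> x _; exact: (smooth_affine_coord u c 0 0%N).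
by move=> x _; exact: (smooth_mink_affine u u c c 0%N).
Qed.

Lemma closure_diamond_lower p q : future (q - p) -> closure (diamond p q) p.
Proof. by move=> hf; apply: closure_open_segment => t ht; exact: diamond_segment. Qed.

Lemma closure_diamond_upper p q : future (q - p) -> closure (diamond p q) q.
Proof.
move=> hf; apply: (@closure_open_segment _ q (p - q)) => t /andP[t0 t1].
have -> : q + t *: (p - q) = p + (1 - t) *: (q - p).
  by apply/matrixP => i j; rewrite !mxE; ring.
by apply: diamond_segment => //; rewrite subr_gt0 t1 ltrBlDr ltrDl.
Qed.

Lemma closure_diamond_causal p q : future (q - p) ->
  closure (diamond p q) `<=` [set x | causal (x - p) /\ causal (q - x)].
Proof.
move=> hf; have -> : [set x | causal (x - p) /\ causal (q - x)] =
    [set x | causal (1 *: x + - p)] `&` [set x | causal ((-1) *: x + q)].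
  by apply/seteqP; split => x /=; rewrite scale1r scaleN1r (addrC (- x)).
set S := _ `&` _; have -> : S = closure S.
  by apply/closure_id; apply: closedI; exact: closed_causal_affine.
apply: closureS => x /(diamondE _ hf) [[h1 h2] [h3 h4]].
by rewrite /S /= scale1r scaleN1r (addrC (- x)); split; split; apply: ltW.
Qed.

(* Both tips lie in the closure, which only contains points causally between them. *)
Lemma diamond_inj p q p' q' : future (q - p) -> future (q' - p') ->
  diamond p q = diamond p' q' -> p = p' /\ q = q'.
Proof.
move=> hf hf' E.
have sub x : closure (diamond p' q') x -> causal (x - p) /\ causal (q - x).
  by rewrite -E; exact: closure_diamond_causal.
have sub' x : closure (diamond p q) x -> causal (x - p') /\ causal (q' - x).
  by rewrite E; exact: closure_diamond_causal.
have [hp _] := sub _ (closure_diamond_lower hf').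
have [_ hq] := sub _ (closure_diamond_upper hf').
have [hp' _] := sub' _ (closure_diamond_lower hf).
have [_ hq'] := sub' _ (closure_diamond_upper hf).
by split; apply/eqP; rewrite -subr_eq0; apply/eqP/causal_eq0; rewrite ?opprB.
Qed.

End DoubleCones.

Section Cochains.
Variable R : realType.
Local Notation pt := (pt R).
Implicit Types (A B : set pt) (g h : pt -> R) (f : set pt -> pt -> R).

Lemma testfun_subset A B g : A `<=` B -> testfun A g -> testfun B g.
Proof.
move=> AB [sg [cg vg]]; split => //; split => // x hx; apply: vg => hA; apply: hx.
exact: (closureS AB).
Qed.

Lemma testfunD A g h : testfun A g -> testfun A h -> testfun A (fun x => g x + h x).
Proof.
move=> [sg [cg vg]] [sh [ch vh]]; split; first by move=> n; apply: smooth_nD.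
split; last by move=> x hx; rewrite vg // vh // addr0.
have hU := compactU cg ch.
have hcl := compact_closed (@norm_hausdorff _ _) hU.
apply: (subclosed_compact _ hU); first exact: closed_closure.
move=> x hx; apply: hcl; move: x hx; apply: closureS => x /= hx.
have [g0|g0] := eqVneq (g x) 0; last by left; apply: subset_closure.
by right; apply: subset_closure; move: hx; rewrite g0 add0r.
Qed.

Lemma testfunN A g : testfun A g -> testfun A (fun x => - g x).
Proof.
move=> [sg [cg vg]]; split; first by move=> n; apply: smooth_nN.
split; last by move=> x hx; rewrite vg // oppr0.
have -> : [set x | - g x != 0] = [set x | g x != 0].
  by apply/seteqP; split => x /=; rewrite oppr_eq0.
exact: cg.
Qed.

Lemma C1_delta f : C0 f -> C1 (delta f).
Proof.
move=> hf c d0 d1 [hc h0 h1 s0 s1]; apply: testfunD (hf _ hc).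
apply: testfunD; first exact: testfun_subset s0 (hf _ h0).
by apply: testfunN; exact: testfun_subset s1 (hf _ h1).
Qed.

Lemma C1_inv_delta f : C0_inv f -> C1_inv (delta f).
Proof.
move=> hf L b hP c d0 d1 [hc h0 h1 _ _]; apply/funext => x.
have fx a : isK a -> f (pact L b @` a) (pact L b x) = f a x.
  by move=> ha; exact: (congr1 (fun g => g x) (hf L b hP a ha)).
by rewrite /delta /= !fx.
Qed.

Lemma cev_delta f c d0 d1 : cev (delta f) c d0 d1 = f c.
Proof. by apply/funext => x; rewrite /cev /delta; field. Qed.

Lemma codd_delta f c d0 d1 : codd (delta f) c d0 d1 = (fun x => f d0 x - f d1 x).
Proof. by apply/funext => x; rewrite /codd /delta; field. Qed.

End Cochains.

Section Bump.
Variable R : realType.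
Local Notation pt := (pt R).
Implicit Types (p q x : pt) (L : 'M[R]_4).

Definition bump p q x : R :=
  exp_inv 1 (mink (x - p) (x - p)) * exp_inv 1 (mink (q - x) (q - x)) *
  exp_inv 1 (mink (x - p) (q - x)).

Lemma bump_ge0 p q x : 0 <= bump p q x.
Proof. by rewrite /bump !mulr_ge0 ?exp_inv1_ge0. Qed.

Lemma bump_support p q : [set x | bump p q x != 0] = diamond p q.
Proof.
apply/seteqP; split => x; rewrite /= /bump !mulf_eq0 !negb_or.
  by case/andP => /andP[/exp_inv1_neq0 ? /exp_inv1_neq0 ?] /exp_inv1_neq0 ?.
by move=> [/exp_inv1_neq0 -> [/exp_inv1_neq0 -> /exp_inv1_neq0 ->]].
Qed.

Lemma bumpC p q : bump p q = bump q p.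
Proof.
apply/funext => x; rewrite /bump -(opprB x q) -(opprB p x) !minkNN.
by rewrite [mink (x - q) (p - x)]minkC; congr (_ * _); exact: mulrC.
Qed.

Lemma bump_pact L b p q : poincare L b -> bump (pact L b p) (pact L b q) \o pact L b = bump p q.
Proof. by move=> [he _]; apply/funext => x; rewrite /bump /= !pactB !mink_lorentz. Qed.

Lemma smooth_bump p q : smooth (bump p q).
Proof.
have -> : bump p q = (fun x =>
    exp_inv 1 (mink (1 *: x + - p) (1 *: x + - p)) *
    exp_inv 1 (mink ((-1) *: x + q) ((-1) *: x + q)) *
    exp_inv 1 (mink (1 *: x + - p) ((-1) *: x + q))).
  by apply/funext => x; rewrite /bump scale1r scaleN1r (addrC (- x)).
move=> n; apply: smooth_nM; first apply: smooth_nM.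
all: by apply: smooth_exp_inv_comp; exact: smooth_mink_affine.
Qed.

Definition box p (h : R) : set pt :=
  [set v | forall i, `[p 0 i - h, p 0 i + h]%classic (v 0 i)].

Lemma compact_box p h : compact (box p h).
Proof.
apply: (@rV_compact _ _ (fun i => `[p 0 i - h, p 0 i + h]%classic)) => i.
exact: segment_compact.
Qed.

(* A future vector dominates each of its coordinates by its time component. *)
Lemma diamond_sub_box p q : future (q - p) -> diamond p q `<=` box p ((q - p) 0 0).
Proof.
move=> hf x /(diamondE _ hf) [[a0 ha] [b0 hb]] i; rewrite /= in_itv /=.
have -> : (q - p) 0 0 = (x - p) 0 0 + (q - x) 0 0 by rewrite !mxE; ring.
have -> : x 0 i = p 0 i + (x - p) 0 i by rewrite !mxE; ring.
rewrite !lerD2l; move: ha; rewrite minkxx subr_gt0 => ha.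
have s1 := sqr_ge0 ((x - p) 0 o1); have s2 := sqr_ge0 ((x - p) 0 o2).
have s3 := sqr_ge0 ((x - p) 0 o3).
by case: (ord4P i) => ->; apply/andP; split; nra.
Qed.

Lemma compact_closure_diamond p q : future (q - p) -> compact (closure (diamond p q)).
Proof.
move=> hf; have hb := @compact_box p ((q - p) 0 0).
apply: (subclosed_compact _ hb); first exact: closed_closure.
move=> x hx; apply: (compact_closed (@norm_hausdorff _ _) hb).
exact: closureS (diamond_sub_box hf) _ hx.
Qed.

Lemma testfun_bump p q : future (q - p) -> testfun (diamond p q) (bump p q).
Proof.
move=> hf; split; first exact: smooth_bump.
rewrite bump_support; split; first exact: compact_closure_diamond.
move=> x hx; apply/eqP/negPn/negP => hne; apply: hx; apply: subset_closure.
by rewrite -bump_support.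
Qed.

Lemma bump_neq0 p q : future (q - p) -> bump p q <> (fun _ => 0).
Proof.
move=> hf E; have : diamond p q (p + 2^-1 *: (q - p)).
  by apply: diamond_segment => //; lra.
by rewrite -bump_support /= E eqxx.
Qed.

Definition bump_cochain (a : set pt) : pt -> R :=
  match pselect (exists pq, future (pq.2 - pq.1) /\ a = diamond pq.1 pq.2) with
  | left H => bump (projT1 (cid H)).1 (projT1 (cid H)).2
  | right _ => fun _ => 0
  end.

Lemma bump_cochainE p q : future (q - p) -> bump_cochain (diamond p q) = bump p q.
Proof.
move=> hf; rewrite /bump_cochain; case: pselect => [H|nH]; last first.
  by exfalso; apply: nH; exists (p, q).
case: (cid H) => [[p' q'] [hf' E]] /=; rewrite /= in hf' E.
by have [-> ->] := diamond_inj hf' hf (esym E).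
Qed.

Lemma bump_cochain_pact L b (a : set pt) : poincare L b -> isK a ->
  bump_cochain (pact L b @` a) \o pact L b = bump_cochain a.
Proof.
move=> hP /isK_diamond [p [q [hf ->]]].
rewrite pact_diamond // (bump_cochainE hf); have [he _] := hP.
have hm : 0 < mink (pact L b q - pact L b p) (pact L b q - pact L b p).
  by rewrite pactB mink_lorentz //; case: hf.
(* the image tips may come in either time order; [bumpC] covers the reversed one *)
have := timelike_time_neq0 hm; rewrite neq_lt => /orP[t0|t0].
  have hf' : future (pact L b p - pact L b q) by rewrite -opprB; apply: futureN.
  by rewrite diamondC bump_cochainE // bumpC; exact: bump_pact.
by rewrite bump_cochainE //; exact: bump_pact.
Qed.

Lemma bump_cochain_props (a : set pt) : isK a ->
  [/\ testfun a (bump_cochain a), bump_cochain a <> (fun _ => 0)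
    & forall x, 0 <= bump_cochain a x].
Proof.
move=> /isK_diamond [p [q [hf ->]]]; rewrite bump_cochainE //.
by split; [exact: testfun_bump|exact: bump_neq0|exact: bump_ge0].
Qed.

Lemma bump_cochain_inj (a a' : set pt) : isK a -> isK a' ->
  bump_cochain a = bump_cochain a' -> a = a'.
Proof.
move=> /isK_diamond [p [q [hf ->]]] /isK_diamond [p' [q' [hf' ->]]].
by rewrite !bump_cochainE // -bump_support => ->; rewrite bump_support.
Qed.

End Bump.

Unset Implicit Arguments.
Theorem proposition4p12 (R : realType) :
  exists f : set (pt R) -> pt R -> R,
    C0 f /\ C0_inv f /\
    (forall a, isK a -> f a <> (fun _ => 0) /\ (forall x, 0 <= f a x)) /\
    C1 (delta f) /\ C1_inv (delta f) /\
    (forall c d0 d1, simplex1 c d0 d1 ->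
       cev (delta f) c d0 d1 = f c /\
       f c <> (fun _ => 0) /\ (forall x, 0 <= f c x)) /\
    (forall c d0 d1, simplex1 c d0 d1 -> d0 <> d1 ->
       codd (delta f) c d0 d1 = (fun x => f d0 x - f d1 x) /\
       (fun x => f d0 x - f d1 x) <> (fun _ => 0)).
Proof.
exists (@bump_cochain R).
have C0f : C0 (@bump_cochain R) by move=> a /bump_cochain_props [].
have C0_invf : C0_inv (@bump_cochain R) by move=> L b hP a; exact: bump_cochain_pact.
have pos (a : set (pt R)) :
    isK a -> bump_cochain a <> (fun _ => 0) /\ (forall x, 0 <= bump_cochain a x).
  by move=> /bump_cochain_props [].
split; first exact: C0f.
split; first exact: C0_invf.
split; first exact: pos.
split; first exact: C1_delta.
split; first exact: C1_inv_delta.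
split; first by move=> c d0 d1 [hc _ _ _ _]; rewrite cev_delta; split => //; exact: pos.
move=> c d0 d1 [_ h0 h1 _ _] hne; split; first exact: codd_delta.
move=> E; apply: hne; apply: bump_cochain_inj => //; apply/funext => x.
by apply/eqP; rewrite -subr_eq0; apply/eqP; exact: (congr1 (fun g => g x) E).
Qed.
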